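(* Let $(R,\Lambda,S)$ be a generalised Renner–Coxeter system. (i) For every chain $e_1\le e_2\le\cdots\le e_m$ in $E(R)$ there exist $w\in G(R)$ and a chain $f_1\le f_2\le\cdots\le f_m$ in $\Lambda$ such that $wf_iw^{-1}=e_i$ for every $i$. (ii) If $\Lambda$ has a least element $e$, then $\lambda(e)=S$. (iii) For all $e,f\in\Lambda$ and $w\in\mathrm{Red}(e,f)$, $ewf=\max\{h\in\Lambda\mid h\le e,\ h\le f,\ w\in W(h)\}=fw^{-1}e$.
   Context: For a monoid $R$, $E(R)$ is its set of idempotents, $G(R)$ its unit group. $R$ is factorisable if $R=E(R)G(R)=G(R)E(R)$ and idempotents commute; then $E(R)$ is a semilattice ($e\le f\iff ef=fe=e$) on which $G(R)$ acts by conjugation. For $e\in E(R)$, $W(e)=\{w\in G(R)\mid we=ew\}$, $W_\star(e)=\{w\mid we=ew=e\}$. For a Coxeter system $(W,S)$, $W_I$ is the subgroup generated by $I\subseteq S$. A generalised Renner–Coxeter system is a triple $(R,\Lambda,S)$ with: (ECS1) $R$ factorisable; (ECS2) $\Lambda\subseteq E(R)$ contains exactly one element of each $G(R)$-orbit and is closed under multiplication; (ECS3) $(G(R),S)$ is a Coxeter system; (ECS4) for $e_1\le e_2$ in $E(R)$ there are $w\in G(R)$, $f_1\le f_2$ in $\Lambda$ with $wf_iw^{-1}=e_i$; (ECS5) for $e\in\Lambda$, $W(e)$, $W_\star(e)$ are of the form $W_I$; (ECS6) with $\lambda^\star(e)=\{s\in S\mid se=es\ne e\}$, $e\le f$ in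 $\Lambda$ implies $\lambda^\star(e)\subseteq\lambda^\star(f)$. For $e\in\Lambda$, $\lambda(e)\subseteq S$ is defined by $W(e)=W_{\lambda(e)}$. $\mathrm{Red}(e,f)$ is the set of $w\in G(R)$ of minimal Coxeter length in $W_{\lambda(e)}wW_{\lambda(f)}$. *)

From Stdlib Require Import List.
Import ListNotations.

Record monoid := Monoid {
  mcar :> Type;
  mmul : mcar -> mcar -> mcar;
  mone : mcar;
  mmulA : forall x y z, mmul x (mmul y z) = mmul (mmul x y) z;
  mmul1l : forall x, mmul mone x = x;
  mmul1r : forall x, mmul x mone = x
}.
Arguments mmul {m}.
Arguments mone {m}.

Record group := Group {
  gcar :> Type;
  gmul : gcar -> gcar -> gcar;
  gone : gcar;
  ginv : gcar -> gcar;
  gmulA : forall x y z, gmul x (gmul y z) = gmul (gmul x y) z;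
  gmul1l : forall x, gmul gone x = x;
  gmulVl : forall x, gmul (ginv x) x = gone
}.
Arguments gmul {g}.
Arguments gone {g}.
Arguments ginv {g}.

Fixpoint gpow (H : group) (x : H) (n : nat) : H :=
  match n with O => gone | S k => gmul x (gpow H x k) end.
Fixpoint mpow (M : monoid) (x : M) (n : nat) : M :=
  match n with O => mone | S k => mmul x (mpow M x k) end.

Section Defs.
Variable R : monoid.
Local Notation "x * y" := (mmul x y).
Local Notation "1" := (@mone R).

Definition is_unit (x : R) : Prop := exists y : R, x * y = 1 /\ y * x = 1.
Definition idem (x : R) : Prop := x * x = x.
Definition sle (e f : R) : Prop := e * f = e /\ f * e = e.
Definition conj_to (w f e : R) : Prop :=
  exists w' : R, w * w' = 1 /\ w' * w = 1 /\ w * f * w' = e.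

Definition factorisable : Prop :=
  (forall x : R, exists e g, idem e /\ is_unit g /\ x = e * g) /\
  (forall x : R, exists g e, is_unit g /\ idem e /\ x = g * e) /\
  (forall e f : R, idem e -> idem f -> e * f = f * e).

Definition wprod (l : list R) : R := fold_right mmul 1 l.
Definition in_WI (I : R -> Prop) (w : R) : Prop :=
  exists l : list R, Forall I l /\ wprod l = w.
Definition has_word_len (S : R -> Prop) (w : R) (n : nat) : Prop :=
  exists l : list R, Forall S l /\ wprod l = w /\ length l = n.

(* (G(R), S) is a Coxeter system: S consists of involutions generating G(R),
   and G(R) has the presentation < S | (st)^{m(s,t)} = 1 >, m(s,t) the order
   of st, expressed by the universal property of the presentation. *)
Definition coxeter_system (S : R -> Prop) : Prop :=
  (forall s, S s -> is_unit s) /\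
  (forall s, S s -> s * s = 1 /\ s <> 1) /\
  (forall w, is_unit w -> in_WI S w) /\
  (forall (H : group) (f : R -> H),
     (forall s t n, S s -> S t -> mpow R (s * t) n = 1 ->
         gpow H (gmul (f s) (f t)) n = gone) ->
     exists phi : R -> H,
       (forall x y, is_unit x -> is_unit y -> phi (x * y) = gmul (phi x) (phi y)) /\
       (forall s, S s -> phi s = f s)).

Definition W (e w : R) : Prop := is_unit w /\ w * e = e * w.
Definition Wstar (e w : R) : Prop := is_unit w /\ w * e = e /\ e * w = e.
Definition lambda_star (S : R -> Prop) (e s : R) : Prop := S s /\ s * e = e * s /\ s * e <> e.

Definition is_parabolic (S : R -> Prop) (X : R -> Prop) : Prop :=
  exists I : R -> Prop, (forall s, I s -> S s) /\ (forall w, X w <-> in_WI I w).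

(* I is lambda(e), i.e. I ⊆ S and W(e) = W_I *)
Definition is_lambda (S : R -> Prop) (e : R) (I : R -> Prop) : Prop :=
  (forall s, I s -> S s) /\ (forall w, W e w <-> in_WI I w).

Definition gen_renner_coxeter (Lam : R -> Prop) (S : R -> Prop) : Prop :=
  (* ECS1 *) factorisable /\
  (* ECS2 *) (forall f, Lam f -> idem f) /\
             (forall e, idem e -> exists f w, Lam f /\ is_unit w /\ conj_to w f e) /\
             (forall f1 f2 w, Lam f1 -> Lam f2 -> is_unit w -> conj_to w f1 f2 -> f1 = f2) /\
             (forall f1 f2, Lam f1 -> Lam f2 -> Lam (f1 * f2)) /\
  (* ECS3 *) coxeter_system S /\
  (* ECS4 *) (forall e1 e2, idem e1 -> idem e2 -> sle e1 e2 ->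
                exists w f1 f2, is_unit w /\ Lam f1 /\ Lam f2 /\ sle f1 f2 /\
                  conj_to w f1 e1 /\ conj_to w f2 e2) /\
  (* ECS5 *) (forall e, Lam e -> is_parabolic S (W e) /\ is_parabolic S (Wstar e)) /\
  (* ECS6 *) (forall e f, Lam e -> Lam f -> sle e f ->
                forall s, lambda_star S e s -> lambda_star S f s).

(* w in Red(e,f): w of minimal Coxeter length in W(e) w W(f)
   (W_{lambda(e)} = W(e) by definition of lambda) *)
Definition Red (S : R -> Prop) (e f w : R) : Prop :=
  is_unit w /\
  forall a b v n, W e a -> W f b -> v = a * w * b -> has_word_len S v n ->
    exists m, m <= n /\ has_word_len S w m.

End Defs.

(* Everything about the Coxeter system is derived from the universal property
   of its presentation: sending each generator s to (s, {s}) in the Tits group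
   G(R) x P(R) shows that the parity of the sequence of reflections of a word
   depends only on its product.  This gives the deletion and exchange
   conditions, and with them that reduced words of elements of W_I only use
   letters of I, and that a double coset W_I w W_J meeting W_K has its minimal
   representative in W_K.

   (i) By induction on the chain: ECS4 lifts the top inequality into Λ, and the
   new conjugator can be taken in W*(f) for the previous top f, because by ECS6
   the letters of λ*(f) commute with the new top; it therefore fixes the lower
   part of the chain.
   (ii) For the least e and a unit w, ECS4 applied to e (w^-1 e w) <= w^-1 e w
   shows w^-1 e w <= e, so w commutes with e: W(e) = G(R) and λ(e) = S.
   (iii) For k = e (w f w^-1), ECS4 applied to k <= e and k <= w f w^-1 gives
   g in Λ and w = u y c with u in W(e), y in W*(g), c in W(f).  As w is minimal
   in its double coset, w lies in W*(g), so k = g and e w f = k w = g.  The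
   maximality is a direct computation, and f w^-1 e = e w f follows by applying
   the same to w^-1 in Red(f, e). *)

From Stdlib Require Import List Arith Lia Bool FinFun.
From Stdlib Require Import Classical ClassicalEpsilon ProofIrrelevance FunctionalExtensionality.
Import ListNotations.

Declare Scope monoid_scope.
Notation "x * y" := (mmul x y) : monoid_scope.
Notation "1" := mone : monoid_scope.
Open Scope monoid_scope.

Section MonoidFacts.
Context {R : monoid}.
Implicit Types x y z e f g h w : R.

Lemma mulA x y z : x * (y * z) = x * y * z.
Proof. apply mmulA. Qed.
Lemma mul1l x : 1 * x = x.
Proof. apply mmul1l. Qed.
Lemma mul1r x : x * 1 = x.
Proof. apply mmul1r. Qed.

Lemma mulrK x y y' : y * y' = 1 -> x * y * y' = x.
Proof. intro H. rewrite <- mulA, H, mul1r. reflexivity. Qed.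

Lemma inverse_unique x y z : x * y = 1 -> z * x = 1 -> y = z.
Proof. intros H1 H2. rewrite <- (mul1l y), <- H2, <- mulA, H1, mul1r. reflexivity. Qed.

Lemma unit_one : is_unit R (@mone R).
Proof. exists 1. split; apply mul1l. Qed.

Lemma unit_mul x y : is_unit R x -> is_unit R y -> is_unit R (x * y).
Proof.
  intros [x' [H1 H2]] [y' [H3 H4]]. exists (y' * x'). split.
  - rewrite <- mulA, (mulA y), H3, mul1l; auto.
  - rewrite <- mulA, (mulA x'), H2, mul1l; auto.
Qed.

Lemma unit_of_inverse w w' : w * w' = 1 -> w' * w = 1 -> is_unit R w.
Proof. intros; exists w'; auto. Qed.

Lemma conj_to_of_inverse w w' f e : w * w' = 1 -> w' * w = 1 -> w * f * w' = e -> conj_to R w f e.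
Proof. intros; exists w'; auto. Qed.

Lemma conj_to_inverse w f e w' : conj_to R w f e -> w * w' = 1 -> w' * w = 1 -> w * f * w' = e.
Proof.
  intros [w0 [H1 [H2 H3]]] H4 H5.
  assert (w0 = w') by (apply (inverse_unique w); auto). subst; auto.
Qed.

Lemma wprod_app (a b : list R) : wprod R (a ++ b) = wprod R a * wprod R b.
Proof. induction a; simpl. rewrite mul1l; auto. rewrite IHa, mulA; auto. Qed.

Lemma sle_refl e : idem R e -> sle R e e.
Proof. intro H; split; auto. Qed.

Lemma sle_trans e f g : sle R e f -> sle R f g -> sle R e g.
Proof.
  intros [E1 E2] [E3 E4]. split.
  - rewrite <- E1 at 1. rewrite <- mulA, E3, E1. auto.
  - rewrite <- E2 at 1. rewrite mulA, E4, E2. auto.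
Qed.

Lemma sle_antisym e f : sle R e f -> sle R f e -> e = f.
Proof. intros [E1 E2] [E3 E4]. rewrite <- E1, E4. auto. Qed.

Lemma sle_mul h e f : sle R h e -> sle R h f -> sle R h (e * f).
Proof.
  intros [E1 E2] [E3 E4]. split.
  - rewrite mulA, E1, E3. auto.
  - rewrite <- mulA, E4, E2. auto.
Qed.

Lemma sle_mul_l e f : idem R e -> e * f = f * e -> sle R (e * f) e.
Proof. intros Ie C. split; [rewrite <- mulA, <- C, mulA, Ie|rewrite mulA, Ie]; auto. Qed.

Lemma sle_mul_r e f : idem R f -> e * f = f * e -> sle R (e * f) f.
Proof. intros If C. split; [rewrite <- mulA, If|rewrite mulA, <- C, <- mulA, If]; auto. Qed.

Lemma idem_conj w w' e : w' * w = 1 -> idem R e -> idem R (w * e * w').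
Proof.
  unfold idem. intros H1 H2.
  rewrite !mulA, <- (mulA (w * e) w' w), H1, mul1r, <- (mulA w e e), H2. auto.
Qed.

Lemma sle_conj w w' e f : w' * w = 1 -> sle R e f -> sle R (w * e * w') (w * f * w').
Proof.
  intros H [E1 E2]. split.
  - rewrite !mulA, <- (mulA (w * e) w' w), H, mul1r, <- (mulA w e f), E1. auto.
  - rewrite !mulA, <- (mulA (w * f) w' w), H, mul1r, <- (mulA w f e), E2. auto.
Qed.

Lemma W_inverse g a a' : W R g a -> a * a' = 1 -> a' * a = 1 -> W R g a'.
Proof.
  intros [_ C] H1 H2. split; [apply (unit_of_inverse a' a); auto|].
  rewrite <- (mulrK (a' * g) a a' H1), <- (mulA a' g a), <- C, !mulA, H2, mul1l. auto.
Qed.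

Lemma W_mul g a b : W R g a -> W R g b -> W R g (a * b).
Proof.
  intros [Ua Ca] [Ub Cb]. split; [apply unit_mul; auto|].
  rewrite <- mulA, Cb, mulA, Ca, mulA. auto.
Qed.

Lemma comm_of_conj_fix x x' a : x' * x = 1 -> x * a * x' = a -> x * a = a * x.
Proof. intros H E. rewrite <- E at 2. rewrite <- mulA, H, mul1r. auto. Qed.

Lemma fix_inverse_l w w' g : w' * w = 1 -> w * g = g -> w' * g = g.
Proof. intros H E. rewrite <- E at 1. rewrite mulA, H, mul1l. auto. Qed.

Lemma fix_inverse_r w w' g : w * w' = 1 -> g * w = g -> g * w' = g.
Proof. intros H E. rewrite <- E at 1. apply mulrK; auto. Qed.

Lemma Wstar_conj_below a y y' h : Wstar R a y -> sle R h a -> y * y' = 1 -> y * h * y' = h.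
Proof.
  intros [_ [Y1 Y2]] [H1 H2] Hy.
  assert (yh : y * h = h) by (rewrite <- H2, mulA, Y1; auto).
  assert (hy : h * y = h) by (rewrite <- H1, <- mulA, Y2; auto).
  rewrite yh. apply (fix_inverse_r y); auto.
Qed.

Lemma wprod_comm h l : Forall (fun s => s * h = h * s) l -> wprod R l * h = h * wprod R l.
Proof.
  induction 1; simpl. rewrite mul1l, mul1r; auto. rewrite <- mulA, IHForall, mulA, H, <- mulA. auto.
Qed.

End MonoidFacts.


(* Normalises to left-associated products and cancels every [a * b] with a
   hypothesis [a * b = 1] in the context. *)
Ltac msimp := repeat (rewrite ?mulA, ?mul1l, ?mul1r);
  repeat match goal with H : ?a * ?b = 1 |- _ =>
    progress (rewrite ?H, ?(mulrK _ _ _ H)); repeat (rewrite ?mulA, ?mul1l, ?mul1r) end.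

Section ListDelete.
Variable A : Type.

Fixpoint delete (i : nat) (l : list A) : list A :=
  match l, i with
  | [], _ => []
  | _ :: l', 0 => l'
  | x :: l', S i' => x :: delete i' l'
  end.

Lemma length_delete i l : i < length l -> length (delete i l) = length l - 1.
Proof. revert i; induction l; intros i H; simpl in *. lia. destruct i; simpl. lia. rewrite IHl; lia. Qed.

Lemma Forall_delete (P : A -> Prop) i l : Forall P l -> Forall P (delete i l).
Proof. revert i; induction l; intros i H; destruct i; simpl; inversion H; auto. Qed.

Lemma incl_delete i l : incl (delete i l) l.
Proof.
  revert i; induction l as [|a l IHl]; intros i; destruct i; simpl; try apply incl_refl.
  - intros x I; right; auto.
  - apply incl_cons; [left; auto|]. apply incl_tl, IHl.
Qed.

Lemma delete_app_l i a b : i < length a -> delete i (a ++ b) = delete i a ++ b.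
Proof. revert i; induction a; intros i H; simpl in *. lia. destruct i; simpl; auto. rewrite IHa; auto; lia. Qed.

Lemma delete_app_r i a b : length a <= i -> delete i (a ++ b) = a ++ delete (i - length a) b.
Proof.
  revert i; induction a; intros i H; simpl in *. rewrite Nat.sub_0_r; auto.
  destruct i; simpl. lia. rewrite IHa; auto; lia.
Qed.

Lemma not_NoDup_nth (d : A) l : ~ NoDup l ->
  exists i j, i < j /\ j < length l /\ nth i l d = nth j l d.
Proof.
  rewrite (NoDup_nth l d). intro H.
  apply not_all_ex_not in H as [i H]. apply not_all_ex_not in H as [j H].
  assert (i < length l /\ j < length l /\ nth i l d = nth j l d /\ i <> j) as [? [? [? ?]]] by tauto.
  destruct (Nat.lt_gt_cases i j) as [[E|E] _]; auto.
  - exists i, j; auto.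
  - exists j, i; auto.
Qed.

End ListDelete.

Arguments delete {A}.
Section CoxeterWords.
Variable R : monoid.
Variable S : R -> Prop.
Hypothesis HS : coxeter_system R S.
Local Notation wp := (wprod R).
Implicit Types (s t : R) (l k L : list R).

Lemma gen_unit s : S s -> is_unit R s.
Proof. destruct HS as [H _]. auto. Qed.

Lemma gen_square s : S s -> s * s = 1.
Proof. destruct HS as [_ [H _]]. apply H. Qed.

Lemma gen_conj_inj t a b : S t -> t * a * t = t * b * t -> a = b.
Proof.
  intros Ht E. pose proof (gen_square t Ht).
  transitivity (t * (t * a * t) * t); [msimp; auto|].
  rewrite E. msimp. auto.
Qed.

Lemma word_unit l : Forall S l -> is_unit R (wp l).
Proof. induction 1; simpl. apply unit_one. apply unit_mul; auto using gen_unit. Qed.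

Lemma wprod_rev l : Forall S l -> wp l * wp (rev l) = 1 /\ wp (rev l) * wp l = 1.
Proof.
  induction 1 as [|s l Hs _ [A B]]; simpl. split; apply mul1l.
  pose proof (gen_square s Hs). rewrite wprod_app. simpl. rewrite mul1r. split.
  - rewrite mulA, <- (mulA s (wp l)), A. msimp. auto.
  - rewrite mulA, <- (mulA _ s s). msimp. auto.
Qed.

Lemma wprod_rev_inverse l x y : Forall S l -> wp l = x -> x * y = 1 -> wp (rev l) = y.
Proof. intros F E H. symmetry. apply (inverse_unique x); auto. subst x. apply wprod_rev; auto. Qed.

Definition beq (x y : R) : bool := if excluded_middle_informative (x = y) then true else false.

Lemma beq_true x y : beq x y = true <-> x = y.
Proof. unfold beq. destruct (excluded_middle_informative (x = y)); split; congruence. Qed.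

Lemma beq_false x y : beq x y = false <-> x <> y.
Proof. unfold beq. destruct (excluded_middle_informative (x = y)); split; congruence. Qed.

Lemma beq_congr x y x' y' : (x = y <-> x' = y') -> beq x y = beq x' y'.
Proof.
  intro H. destruct (beq x y) eqn:E.
  - apply beq_true in E. symmetry. apply beq_true. tauto.
  - apply beq_false in E. symmetry. apply beq_false. tauto.
Qed.

Lemma beq_conj_gen s x y : S s -> beq x (s * y * s) = beq (s * x * s) y.
Proof.
  intro Hs. pose proof (gen_square s Hs). apply beq_congr.
  split; intro E; subst; msimp; auto.
Qed.

(* The Tits group: pairs (u, A) with u a unit and A a subset of R, multiplied
   by (u, A) (v, B) = (u v, A + u B u^-1), + the symmetric difference. *)
Record tits := Tits {
  tval : R; tinv : R; tset : R -> bool;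
  tval_inv : tval * tinv = 1; tinv_val : tinv * tval = 1 }.

Lemma tits_ext (x y : tits) :
  tval x = tval y -> tinv x = tinv y -> (forall t, tset x t = tset y t) -> x = y.
Proof.
  destruct x as [u v A p1 p2], y as [u' v' A' p1' p2']; simpl. intros E1 E2 E3.
  subst u' v'. assert (A = A') by (apply functional_extensionality; auto). subst A'.
  f_equal; apply proof_irrelevance.
Qed.

Lemma tits_mul_val_inv (x y : tits) : tval x * tval y * (tinv y * tinv x) = 1.
Proof. pose proof (tval_inv x). pose proof (tval_inv y). msimp. auto. Qed.
Lemma tits_mul_inv_val (x y : tits) : tinv y * tinv x * (tval x * tval y) = 1.
Proof. pose proof (tinv_val x). pose proof (tinv_val y). msimp. auto. Qed.

Definition tits_mul (x y : tits) : tits :=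
  Tits (tval x * tval y) (tinv y * tinv x)
    (fun t => xorb (tset x t) (tset y (tinv x * t * tval x)))
    (tits_mul_val_inv x y) (tits_mul_inv_val x y).
Definition tits_one : tits := Tits 1 1 (fun _ => false) (mul1l 1) (mul1l 1).
Definition tits_inv (x : tits) : tits :=
  Tits (tinv x) (tval x) (fun t => tset x (tval x * t * tinv x)) (tinv_val x) (tval_inv x).

Lemma tits_mulA x y z : tits_mul x (tits_mul y z) = tits_mul (tits_mul x y) z.
Proof.
  apply tits_ext; simpl.
  - apply mulA.
  - rewrite mulA. auto.
  - intro t. rewrite xorb_assoc. rewrite !mulA. auto.
Qed.
Lemma tits_mul1l x : tits_mul tits_one x = x.
Proof. apply tits_ext; simpl. apply mul1l. apply mul1r. intro t. rewrite mul1l, mul1r. auto. Qed.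
Lemma tits_mulVl x : tits_mul (tits_inv x) x = tits_one.
Proof. apply tits_ext; simpl. apply tinv_val. apply tinv_val. intro t. apply xorb_nilpotent. Qed.

Definition tits_group : group := Group tits tits_mul tits_one tits_inv tits_mulA tits_mul1l tits_mulVl.

Definition tits_gen (r : R) : tits :=
  match excluded_middle_informative (S r) with
  | left H => Tits r r (fun t => beq t r) (gen_square r H) (gen_square r H)
  | right _ => tits_one
  end.

Lemma tits_gen_S r (H : S r) : tits_gen r = Tits r r (fun t => beq t r) (gen_square r H) (gen_square r H).
Proof.
  unfold tits_gen. destruct (excluded_middle_informative (S r)).
  - f_equal; apply proof_irrelevance.
  - contradiction.
Qed.

Lemma mpow_add (u : R) a b : mpow R u (a + b) = mpow R u a * mpow R u b.
Proof. induction a; simpl. rewrite mul1l; auto. rewrite IHa, mulA. auto. Qed.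

Lemma mpow_comm (u : R) j : mpow R u j * u = u * mpow R u j.
Proof. induction j; simpl. rewrite mul1l, mul1r; auto. rewrite <- mulA, IHj. auto. Qed.

Section DihedralRelation.
Variables s t : R.
Hypothesis Hs : S s.
Hypothesis Ht : S t.

(* The subset attached to (s t)^n in the Tits group is the parity of the
   reflections (st)^j s, j = 0 .. 2n-1, i.e. [dihedral_parity (2 n) 0]. *)
Fixpoint dihedral_parity (n j : nat) (x : R) : bool :=
  match n with
  | 0 => false
  | Datatypes.S n' => xorb (beq x (mpow R (s * t) j * s)) (dihedral_parity n' (j + 1) x)
  end.

Lemma dihedral_parity_conj n j x :
  dihedral_parity n j (t * s * x * (s * t)) = dihedral_parity n (j + 2) x.
Proof.
  pose proof (gen_square s Hs). pose proof (gen_square t Ht).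
  revert j. induction n; intro j; simpl; auto.
  rewrite IHn, (Nat.add_shuffle0 j 1 2). f_equal. apply beq_congr.
  replace (j + 2) with (Datatypes.S (Datatypes.S j)) by lia. simpl.
  rewrite (mulA (s * t) (s * t)), <- (mulA (s * t) (s * t)), <- mpow_comm, mulA.
  split; intro E.
  - transitivity (s * t * (t * s * x * s * t) * (t * s)); [msimp; auto|].
    rewrite E. msimp. auto.
  - rewrite E. msimp. auto.
Qed.

Lemma dihedral_parity_add a b j x :
  dihedral_parity (a + b) j x = xorb (dihedral_parity a j x) (dihedral_parity b (j + a) x).
Proof.
  revert j. induction a; intro j; simpl. rewrite Nat.add_0_r; auto.
  rewrite IHa, xorb_assoc. do 3 f_equal. lia.
Qed.

Lemma dihedral_parity_period n a j x :
  mpow R (s * t) n = 1 -> dihedral_parity a (j + n) x = dihedral_parity a j x.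
Proof.
  intro H. revert j. induction a; intro j; simpl; auto.
  replace (j + n + 1) with (j + 1 + n) by lia.
  rewrite IHa, mpow_add, H, mul1r. reflexivity.
Qed.

Lemma tits_gen_pow n :
  tval (gpow tits_group (tits_mul (tits_gen s) (tits_gen t)) n) = mpow R (s * t) n /\
  forall x, tset (gpow tits_group (tits_mul (tits_gen s) (tits_gen t)) n) x =
            dihedral_parity (n + n) 0 x.
Proof.
  pose proof (gen_square s Hs) as ss.
  rewrite (tits_gen_S s Hs), (tits_gen_S t Ht).
  induction n as [|n [IH1 IH2]]; simpl; auto. split.
  - rewrite IH1. auto.
  - intro x. rewrite IH2, Nat.add_succ_r. simpl.
    rewrite xorb_assoc. f_equal.
    + apply beq_congr. rewrite mul1l. tauto.
    + f_equal.
      * apply beq_congr. rewrite mul1r. split; intro E; [rewrite <- E|rewrite E]; msimp; auto.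
      * rewrite dihedral_parity_conj. auto.
Qed.

Lemma tits_gen_relation n :
  mpow R (s * t) n = 1 -> gpow tits_group (tits_mul (tits_gen s) (tits_gen t)) n = tits_one.
Proof.
  intro H. destruct (tits_gen_pow n) as [E1 E2].
  set (X := gpow tits_group (tits_mul (tits_gen s) (tits_gen t)) n) in *.
  apply tits_ext; simpl.
  - rewrite E1. auto.
  - pose proof (tval_inv X) as P. rewrite E1, H, mul1l in P. auto.
  - intro x. rewrite E2, dihedral_parity_add, (dihedral_parity_period n n 0 x H).
    apply xorb_nilpotent.
Qed.

End DihedralRelation.

(* [reflections [s1; ...; sk]] lists the reflections s1, s1 s2 s1, ...,
   (s1 ... sk-1) sk (s1 ... sk-1)^-1. *)
Fixpoint reflections (l : list R) : list R :=
  match l with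
  | [] => []
  | s :: l' => s :: map (fun y => s * y * s) (reflections l')
  end.

Definition parity (L : list R) (x : R) : bool :=
  fold_right (fun p b => xorb (beq x p) b) false L.

Lemma parity_conj s L x : S s -> parity (map (fun y => s * y * s) L) x = parity L (s * x * s).
Proof.
  intro Hs. induction L; simpl; auto. rewrite IHL. f_equal. apply beq_conj_gen; auto.
Qed.

Lemma parity_reflections_invariant l1 l2 : Forall S l1 -> Forall S l2 -> wp l1 = wp l2 ->
  forall x, parity (reflections l1) x = parity (reflections l2) x.
Proof.
  destruct HS as [_ [_ [_ Huniv]]].
  destruct (Huniv tits_group tits_gen) as [phi [Hm Hf]].
  { intros s t n Hs Ht E. apply tits_gen_relation; auto. }
  assert (P1 : phi 1 = tits_one).
  { pose proof (Hm 1 1 unit_one unit_one) as E. rewrite mul1l in E.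
    change (phi 1 = tits_mul (phi 1) (phi 1)) in E.
    assert (tits_mul (tits_inv (phi 1)) (tits_mul (phi 1) (phi 1)) =
            tits_mul (tits_inv (phi 1)) (phi 1)) as H by (rewrite <- E; auto).
    rewrite tits_mulA, tits_mulVl, tits_mul1l in H. auto. }
  assert (PW : forall l, Forall S l -> forall x, tset (phi (wp l)) x = parity (reflections l) x).
  { induction 1 as [|s l Hs F IH]; intro x; simpl.
    - rewrite P1. auto.
    - rewrite (Hm s (wp l) (gen_unit s Hs) (word_unit l F)), (Hf s Hs), (tits_gen_S s Hs).
      simpl. rewrite IH, parity_conj; auto. }
  intros F1 F2 E x. rewrite <- (PW l1 F1), <- (PW l2 F2), E. auto.
Qed.

Lemma length_reflections l : length (reflections l) = length l.
Proof. induction l; simpl; auto. rewrite length_map; auto. Qed.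

Lemma parity_In L x : parity L x = true -> In x L.
Proof.
  induction L; simpl; [discriminate|]. intro H.
  destruct (beq x a) eqn:E; [apply beq_true in E; auto|]. right; auto.
Qed.

Lemma parity_NoDup L x : NoDup L -> In x L -> parity L x = true.
Proof.
  induction 1 as [|a L Na N IH]; simpl; [tauto|]. intros [E|I].
  - subst. rewrite (proj2 (beq_true x x) eq_refl). simpl.
    destruct (parity L x) eqn:E; auto. apply parity_In in E. contradiction.
  - rewrite (proj2 (beq_false x a)) by (intro; subst; contradiction). auto.
Qed.

Definition reduced (l : list R) : Prop :=
  Forall S l /\ forall l', Forall S l' -> wp l' = wp l -> length l <= length l'.

Lemma reduced_of_NoDup_reflections l : Forall S l -> NoDup (reflections l) -> reduced l.
Proof.
  intros F N. split; auto. intros l' F' E.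
  rewrite <- (length_reflections l), <- (length_reflections l'). apply NoDup_incl_length; auto.
  intros x I. apply parity_In. rewrite (parity_reflections_invariant l' l F' F E).
  apply parity_NoDup; auto.
Qed.

Lemma nth_map_conj s L m : m < length L ->
  nth m (map (fun y => s * y * s) L) 1 = s * nth m L 1 * s.
Proof.
  intro H. rewrite (nth_indep _ _ ((fun y => s * y * s) 1)) by (rewrite length_map; auto).
  apply (map_nth (fun y => s * y * s)).
Qed.

Lemma reflection_mul_wprod k m y : Forall S k -> m < length k ->
  nth m (reflections k) 1 = y -> y * wp k = wp (delete m k).
Proof.
  revert m y. induction k as [|t k IH]; intros m y F Hm E; simpl in *. lia.
  inversion F as [|? ? Ht Fk]. pose proof (gen_square t Ht). destruct m.
  - subst y. msimp. auto.
  - rewrite nth_map_conj in E by (rewrite length_reflections; lia). subst y. simpl.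
    rewrite <- (IH m (nth m (reflections k) 1)); auto; try lia. msimp. auto.
Qed.

Lemma wprod_delete2 k i j : Forall S k -> i < j -> j < length k ->
  nth i (reflections k) 1 = nth j (reflections k) 1 -> wp k = wp (delete i (delete j k)).
Proof.
  revert i j. induction k as [|t k IH]; intros i j F Hij Hj E; simpl in *. lia.
  inversion F as [|? ? Ht Fk]. pose proof (gen_square t Ht). destruct j; [lia|]. destruct i.
  - simpl. rewrite nth_map_conj in E by (rewrite length_reflections; lia).
    assert (En : nth j (reflections k) 1 = t).
    { apply (gen_conj_inj t); auto. rewrite <- E. msimp. auto. }
    rewrite <- (reflection_mul_wprod k j t); auto; lia.
  - simpl. f_equal. apply IH; auto; try lia.
    rewrite !nth_map_conj in E by (rewrite length_reflections; lia).
    apply (gen_conj_inj t); auto.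
Qed.

Lemma reduced_NoDup_reflections l : reduced l -> NoDup (reflections l).
Proof.
  intros [F M]. apply NNPP. intro N. apply (not_NoDup_nth _ 1) in N as [i [j [A [B C]]]].
  rewrite length_reflections in B.
  pose proof (wprod_delete2 l i j F A B C) as E.
  specialize (M _ (Forall_delete _ _ i _ (Forall_delete _ _ j _ F)) (eq_sym E)).
  rewrite (length_delete _ i) in M by (rewrite length_delete; lia). rewrite length_delete in M by lia. lia.
Qed.

Lemma reduced_subword k : Forall S k -> exists k', reduced k' /\ incl k' k /\ wp k' = wp k.
Proof.
  remember (length k) as n eqn:Hn. revert k Hn.
  induction n as [n IH] using lt_wf_ind. intros k Hn F.
  destruct (classic (NoDup (reflections k))) as [N|N].
  - exists k. split; [apply reduced_of_NoDup_reflections; auto|]. split; [apply incl_refl|auto].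
  - apply (not_NoDup_nth _ 1) in N as [i [j [A [B C]]]]. rewrite length_reflections in B.
    destruct (IH (length (delete i (delete j k)))) with (delete i (delete j k))
      as [k' [K1 [K2 K3]]]; auto using Forall_delete.
    + rewrite (length_delete _ i) by (rewrite length_delete; lia). rewrite length_delete; lia.
    + exists k'. split; auto. split.
      * intros x I. apply (incl_delete _ j k), (incl_delete _ i (delete j k)), K2; auto.
      * rewrite K3, <- wprod_delete2; auto.
Qed.

Lemma reduced_tail s l : reduced (s :: l) -> reduced l.
Proof.
  intros [F M]. inversion F as [|? ? F1 F2]. split; auto. intros l' F' E.
  specialize (M (s :: l') (Forall_cons _ F1 F')). simpl in M. rewrite E in M.
  specialize (M eq_refl). lia.
Qed.

Lemma reduced_length_eq l l' : reduced l -> reduced l' -> wp l = wp l' -> length l = length l'.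
Proof. intros [F M] [F' M'] E. specialize (M l' F' (eq_sym E)). specialize (M' l F E). lia. Qed.

Lemma reduced_rev l : reduced l -> reduced (rev l).
Proof.
  intros [F M]. split; [apply Forall_rev; auto|]. intros l' F' E.
  rewrite length_rev, <- (length_rev l'). apply M; [apply Forall_rev; auto|].
  apply (wprod_rev_inverse l' (wp l')); auto. rewrite E. rewrite <- (rev_involutive l) at 2.
  apply wprod_rev. apply Forall_rev; auto.
Qed.

Lemma exchange s l : reduced l -> S s -> reduced (s :: l) \/
  exists i, i < length l /\ s * wp l = wp (delete i l) /\ reduced (delete i l).
Proof.
  intros Hr Hs. destruct (classic (reduced (s :: l))) as [H|H]; [left; auto|right].
  pose proof (gen_square s Hs) as Hss.
  assert (F : Forall S l) by (destruct Hr; auto).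
  assert (N : ~ NoDup (reflections (s :: l)))
    by (intro N; apply H, reduced_of_NoDup_reflections; auto).
  simpl in N. rewrite NoDup_cons_iff in N.
  assert (Nd : NoDup (map (fun y => s * y * s) (reflections l))).
  { apply Injective_map_NoDup; [intros a b; apply gen_conj_inj; auto|].
    apply reduced_NoDup_reflections; auto. }
  assert (I : In s (map (fun y => s * y * s) (reflections l))) by (apply NNPP; tauto).
  apply in_map_iff in I as [q [E I]].
  assert (q = s) by (apply (gen_conj_inj s); auto; rewrite E; msimp; auto). subst q.
  apply In_nth with (d := 1) in I as [m [Hm Em]]. rewrite length_reflections in Hm.
  assert (E2 : s * wp l = wp (delete m l)) by (apply reflection_mul_wprod; auto).
  exists m. split; auto. split; auto. split; [apply Forall_delete; auto|].
  intros l' F' E'. destruct Hr as [_ M].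
  specialize (M (s :: l') (Forall_cons _ Hs F')). simpl in M.
  rewrite E', <- E2 in M. rewrite mulA, Hss, mul1l in M. specialize (M eq_refl). rewrite length_delete; lia.
Qed.

Lemma parabolic_gen_mem (I : R -> Prop) s k : (forall x, I x -> S x) -> S s ->
  Forall I k -> wp k = s -> I s.
Proof.
  intros HI Hs FI E.
  destruct (reduced_subword k (Forall_impl _ HI FI)) as [k' [[F' M] [Inc E']]].
  assert (L : length k' <= 1) by (apply (M [s]); [constructor; auto|simpl; rewrite mul1r, E', E; auto]).
  destruct k' as [|t [|t2 k'']]; simpl in *.
  - exfalso. destruct HS as [_ [H2 _]]. apply (proj2 (H2 s Hs)). rewrite <- E, <- E'. auto.
  - rewrite mul1r in E'. rewrite <- E, <- E'. rewrite Forall_forall in FI. apply FI, Inc. left; auto.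
  - lia.
Qed.

(* For l = s l', exchange s against a reduced word m of the same element written
   in I: then s lies in W_I, hence in I, and s l' = (a subword of m) is in W_I. *)
Lemma reduced_parabolic (I : R -> Prop) : (forall x, I x -> S x) ->
  forall l, reduced l -> forall k, Forall I k -> wp k = wp l -> Forall I l.
Proof.
  intros HI l. induction l as [|s l IH]; intros Hr k FI E; [constructor|].
  destruct (reduced_subword k (Forall_impl _ HI FI)) as [m [Rm [Inc Em]]].
  assert (FIm : Forall I m) by (rewrite Forall_forall in *; auto).
  assert (Fsl : Forall S (s :: l)) by (destruct Hr; auto). inversion Fsl as [|? ? Hs Fl].
  pose proof (gen_square s Hs).
  assert (Lm : length m = length (s :: l)) by (apply reduced_length_eq; auto; rewrite Em; auto).
  assert (El : wp l = s * wp (s :: l)) by (simpl; msimp; auto).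
  destruct (exchange s m Rm Hs) as [[_ M2]|[i [Hi [Ei Ri]]]].
  - exfalso. specialize (M2 l Fl). simpl in M2.
    rewrite Em, E, <- El in M2. specialize (M2 eq_refl). simpl in Lm. lia.
  - destruct Rm as [Fm _]. destruct (wprod_rev m Fm) as [A _].
    constructor.
    + apply (parabolic_gen_mem I s (delete i m ++ rev m)); auto.
      * apply Forall_app. split; [apply Forall_delete; auto | apply Forall_rev; auto].
      * rewrite wprod_app, <- Ei. msimp. auto.
    + apply (IH (reduced_tail s l Hr) (delete i m)); [apply Forall_delete; auto|].
      rewrite <- Ei, Em, E, El. auto.
Qed.

Definition min_double_coset (I J : R -> Prop) (lw : list R) : Prop :=
  forall la lc lv, Forall I la -> Forall J lc -> Forall S lv ->
    wp lv = wp la * wp lw * wp lc -> length lw <= length lv.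

Lemma min_double_coset_rev I J lw : (forall x, I x -> S x) -> (forall x, J x -> S x) ->
  Forall S lw -> min_double_coset I J lw -> min_double_coset J I (rev lw).
Proof.
  intros HI HJ Fw M la lc lv Fa Fc Fv E.
  destruct (wprod_rev la (Forall_impl _ HJ Fa)) as [A1 A2].
  destruct (wprod_rev lc (Forall_impl _ HI Fc)) as [C1 C2].
  destruct (wprod_rev lw Fw) as [W1 W2].
  rewrite length_rev, <- (length_rev lv).
  apply (M (rev lc) (rev la)); try apply Forall_rev; auto.
  apply (wprod_rev_inverse lv (wp lv)); auto. rewrite E. msimp. auto.
Qed.

Section DoubleCoset.
Variables I J : R -> Prop.
Hypothesis HI : forall x, I x -> S x.
Hypothesis HJ : forall x, J x -> S x.

(* The exchange condition applied to s la lw lc can only delete a letter of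
   la or of lc: deleting one of lw would shorten the double coset representative. *)
Lemma double_coset_mul_left lw la lc s : min_double_coset I J lw ->
  Forall I la -> Forall J lc -> reduced (la ++ lw ++ lc) -> I s ->
  exists la' lc', Forall I la' /\ Forall J lc' /\ reduced (la' ++ lw ++ lc') /\
    wp (la' ++ lw ++ lc') = s * wp (la ++ lw ++ lc).
Proof.
  intros M Fa Fc Hr Hs.
  destruct (exchange s _ Hr (HI s Hs)) as [H|[i [Hi [Ei Ri]]]].
  { exists (s :: la), lc. do 3 (split; auto). }
  rewrite !length_app in Hi.
  destruct (Nat.lt_ge_cases i (length la)) as [C|C].
  { rewrite delete_app_l in Ei, Ri by auto.
    exists (delete i la), lc. do 3 (split; auto using Forall_delete). }
  rewrite delete_app_r in Ei, Ri by auto.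
  destruct (Nat.lt_ge_cases (i - length la) (length lw)) as [C2|C2].
  - exfalso. rewrite delete_app_l in Ei by auto.
    destruct (wprod_rev la (Forall_impl _ HI Fa)) as [A1 A2].
    assert (Fw : Forall S lw)
      by (destruct Hr as [F _]; apply Forall_app in F as [_ F]; apply Forall_app in F; tauto).
    assert (L := M (rev la ++ s :: la) [] (delete (i - length la) lw)).
    rewrite length_delete in L by auto.
    enough (length lw <= length lw - 1) by lia.
    apply L; auto using Forall_delete.
    + apply Forall_app. split; [apply Forall_rev|constructor]; auto.
    + destruct (wprod_rev lc (Forall_impl _ HJ Fc)) as [C1 _].
      rewrite !wprod_app in Ei. rewrite wprod_app. simpl.
      transitivity (wp (rev la) * (wp la * (wp (delete (i - length la) lw) * wp lc)) * wp (rev lc));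
        [msimp; auto|].
      rewrite <- Ei. msimp. auto.
  - rewrite delete_app_r in Ei, Ri by auto.
    exists la, (delete (i - length la - length lw) lc). do 3 (split; auto using Forall_delete).
Qed.

End DoubleCoset.

Lemma double_coset_mul_right I J lw la lc t :
  (forall x, I x -> S x) -> (forall x, J x -> S x) -> Forall S lw -> min_double_coset I J lw ->
  Forall I la -> Forall J lc -> reduced (la ++ lw ++ lc) -> J t ->
  exists la' lc', Forall I la' /\ Forall J lc' /\ reduced (la' ++ lw ++ lc') /\
    wp (la' ++ lw ++ lc') = wp (la ++ lw ++ lc) * t.
Proof.
  intros HI HJ Fw M Fa Fc Hr Ht.
  assert (Er : forall a b c : list R, rev (a ++ b ++ c) = rev c ++ rev b ++ rev a)
    by (intros; rewrite !rev_app_distr, app_assoc; auto).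
  destruct (double_coset_mul_left J I HJ HI (rev lw) (rev lc) (rev la) t)
    as [lc2 [la2 [F1 [F2 [R2 E2]]]]]; auto using min_double_coset_rev, Forall_rev.
  { rewrite <- Er. apply reduced_rev; auto. }
  exists (rev la2), (rev lc2).
  assert (Er2 : rev (lc2 ++ rev lw ++ la2) = rev la2 ++ lw ++ rev lc2)
    by (rewrite Er, rev_involutive; auto).
  split; [apply Forall_rev; auto|]. split; [apply Forall_rev; auto|]. split.
  - rewrite <- Er2. apply reduced_rev; auto.
  - rewrite <- Er2. destruct R2 as [F _]. apply (wprod_rev_inverse _ (wp (lc2 ++ rev lw ++ la2))); auto.
    rewrite E2, <- Er. destruct Hr as [FL _]. destruct (wprod_rev _ FL) as [_ A2].
    pose proof (gen_square t (HJ t Ht)). msimp. auto.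
Qed.

Lemma double_coset_reduced I J lw la0 lc0 :
  (forall x, I x -> S x) -> (forall x, J x -> S x) -> reduced lw -> min_double_coset I J lw ->
  Forall I la0 -> Forall J lc0 -> exists la lc, Forall I la /\ Forall J lc /\
    reduced (la ++ lw ++ lc) /\ wp (la ++ lw ++ lc) = wp la0 * wp lw * wp lc0.
Proof.
  intros HI HJ Rw M Fa0 Fc0.
  assert (Right : exists la lc, Forall I la /\ Forall J lc /\ reduced (la ++ lw ++ lc) /\
    wp (la ++ lw ++ lc) = wp lw * wp lc0).
  { clear Fa0. induction lc0 as [|t lc0 IH] using rev_ind.
    - exists [], []. simpl. rewrite app_nil_r, mul1r. auto.
    - apply Forall_app in Fc0 as [F1 F2]. inversion F2 as [|? ? Ht _].
      destruct (IH F1) as [la [lc [Fa [Fc [Rr E]]]]].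
      destruct (double_coset_mul_right I J lw la lc t) as [la' [lc' [Fa' [Fc' [Rr' E']]]]];
        auto; [destruct Rw; auto|].
      exists la', lc'. do 3 (split; auto). rewrite E', E, wprod_app. simpl. rewrite mul1r, mulA. auto. }
  induction la0 as [|s la0 IH].
  - simpl. rewrite mul1l. auto.
  - inversion Fa0 as [|? ? Hs Fa1]. destruct (IH Fa1) as [la [lc [Fa [Fc [Rr E]]]]].
    destruct (double_coset_mul_left I J HI HJ lw la lc s) as [la' [lc' [Fa' [Fc' [Rr' E']]]]]; auto.
    exists la', lc'. do 3 (split; auto). rewrite E', E. simpl. rewrite !mulA. auto.
Qed.

Lemma min_double_coset_parabolic I J K lw la0 lc0 lk :
  (forall x, I x -> S x) -> (forall x, J x -> S x) -> (forall x, K x -> S x) ->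
  reduced lw -> min_double_coset I J lw -> Forall I la0 -> Forall J lc0 ->
  Forall K lk -> wp lk = wp la0 * wp lw * wp lc0 -> Forall K lw.
Proof.
  intros HI HJ HK Rw M Fa0 Fc0 Fk E.
  destruct (double_coset_reduced I J lw la0 lc0) as [la [lc [Fa [Fc [Rr E2]]]]]; auto.
  assert (FL : Forall K (la ++ lw ++ lc))
    by (apply (reduced_parabolic K HK _ Rr lk Fk); rewrite E2; auto).
  apply Forall_app in FL as [_ FL]. apply Forall_app in FL. tauto.
Qed.

Lemma Red_inverse e f w w' : Red R S e f w -> w * w' = 1 -> w' * w = 1 -> Red R S f e w'.
Proof.
  intros [Uw Hm] W1 W2. split; [apply (unit_of_inverse w' w); auto|].
  intros a b v n Wa Wb Ev [lv [Fv [E L]]].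
  destruct Wa as [[a' [A1 A2]] Ca]. destruct Wb as [[b' [B1 B2]] Cb].
  destruct (Hm b' a' (wp (rev lv)) n) as [m [Hmn [l2 [F2 [E2 L2]]]]].
  - apply (W_inverse e b b'); auto. split; auto. exists b'; auto.
  - apply (W_inverse f a a'); auto. split; auto. exists a'; auto.
  - apply (wprod_rev_inverse lv v); auto. rewrite Ev. msimp. auto.
  - exists (rev lv). split; [apply Forall_rev; auto|]. rewrite length_rev; auto.
  - exists m. split; auto. exists (rev l2). split; [apply Forall_rev; auto|].
    split; [apply (wprod_rev_inverse l2 w); auto|]. rewrite length_rev; auto.
Qed.

Lemma Red_min_double_coset e f w I J lw : Red R S e f w ->
  (forall v, W R e v <-> in_WI R I v) -> (forall v, W R f v <-> in_WI R J v) ->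
  reduced lw -> wp lw = w -> min_double_coset I J lw.
Proof.
  intros [_ Hmin] HWI HWJ [_ Mw] Ew la lc lv Fa Fc Fv Ev.
  destruct (Hmin (wp la) (wp lc) (wp lv) (length lv)) as [m [Hm [l2 [F2 [E2 L2]]]]].
  - apply HWI. exists la; auto.
  - apply HWJ. exists lc; auto.
  - rewrite Ev, Ew. auto.
  - exists lv; auto.
  - specialize (Mw l2 F2). rewrite E2, Ew in Mw. specialize (Mw eq_refl). lia.
Qed.
End CoxeterWords.

Section RennerCoxeter.
Variable R : monoid.
Variables Lam S : R -> Prop.
Hypothesis HRC : gen_renner_coxeter R Lam S.
Local Notation wp := (wprod R).

Lemma rc_coxeter : coxeter_system R S.
Proof. destruct HRC as [_ [_ [_ [_ [_ [H _]]]]]]. auto. Qed.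

Lemma rc_idem_comm e f : idem R e -> idem R f -> e * f = f * e.
Proof. destruct HRC as [[_ [_ H]] _]. auto. Qed.

Lemma Lam_idem e : Lam e -> idem R e.
Proof. destruct HRC as [_ [H _]]. auto. Qed.

Lemma idem_conj_Lam e : idem R e -> exists f w, Lam f /\ is_unit R w /\ conj_to R w f e.
Proof. destruct HRC as [_ [_ [H _]]]. auto. Qed.

Lemma Lam_conj_eq f1 f2 x x' :
  Lam f1 -> Lam f2 -> x * x' = 1 -> x' * x = 1 -> x * f1 * x' = f2 -> f1 = f2.
Proof.
  intros L1 L2 H1 H2 E. destruct HRC as [_ [_ [_ [Huniq _]]]].
  apply (Huniq f1 f2 x); auto; exists x'; auto.
Qed.

Lemma sle_conj_Lam e1 e2 : idem R e1 -> idem R e2 -> sle R e1 e2 ->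
  exists w f1 f2, is_unit R w /\ Lam f1 /\ Lam f2 /\ sle R f1 f2 /\
    conj_to R w f1 e1 /\ conj_to R w f2 e2.
Proof. destruct HRC as [_ [_ [_ [_ [_ [_ [H _]]]]]]]. auto. Qed.

Lemma Lam_parabolic e : Lam e -> is_parabolic R S (W R e) /\ is_parabolic R S (Wstar R e).
Proof. destruct HRC as [_ [_ [_ [_ [_ [_ [_ [H _]]]]]]]]. auto. Qed.

Lemma lambda_star_mono e f : Lam e -> Lam f -> sle R e f ->
  forall s, lambda_star R S e s -> lambda_star R S f s.
Proof. destruct HRC as [_ [_ [_ [_ [_ [_ [_ [_ H]]]]]]]]. intros. apply (H e f); auto. Qed.

Lemma idem_mul e f : idem R e -> idem R f -> idem R (e * f).
Proof.
  unfold idem. intros Ie If.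
  rewrite !mulA, <- (mulA e f e), (rc_idem_comm f e), mulA, Ie, <- mulA, If; auto.
Qed.

(* Comparable Λ-conjugates coincide: ECS4 conjugates the pair g <= x g x^-1
   into Λ, where both members must equal g. *)
Lemma Lam_le_conj_eq g x x' : Lam g -> x * x' = 1 -> x' * x = 1 ->
  sle R g (x * g * x') -> x * g * x' = g.
Proof.
  intros Lg H1 H2 Hs. pose proof (Lam_idem g Lg) as Ig.
  destruct (sle_conj_Lam g (x * g * x')) as [t [p1 [p2 [[t' [T1 T2]] [L1 [L2 [S12 [C1 C2]]]]]]]];
    auto using idem_conj.
  apply conj_to_inverse with (w' := t') in C1, C2; auto.
  assert (p1 = g) by (apply (Lam_conj_eq p1 g t t'); auto). subst p1.
  assert (p2 = g).
  { apply (Lam_conj_eq p2 g (x' * t) (t' * x)); auto; try (msimp; auto).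
    transitivity (x' * (t * p2 * t') * x); [msimp; auto|]. rewrite C2. msimp. auto. }
  subst p2. rewrite <- C2. auto.
Qed.

(* A word commuting with g is regrouped as y * (letters of λ*(g)), with y in W*(g):
   letters fixing g are pushed left, conjugating the remaining prefix. *)
Lemma centraliser_word_split g l : Forall (fun s => S s /\ s * g = g * s) l ->
  exists y lx, wp l = y * wp lx /\ Wstar R g y /\ Forall (lambda_star R S g) lx.
Proof.
  induction 1 as [|s l [Hs Hc] F [y [lx [E [[Uy [Y1 Y2]] FL]]]]].
  { exists 1, []. simpl. rewrite mul1l. repeat split; auto using unit_one, mul1l, mul1r. }
  pose proof (gen_unit R S rc_coxeter s Hs) as Us.
  pose proof (gen_square R S rc_coxeter s Hs) as ss.
  destruct (classic (s * g = g)) as [Fx|NFx].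
  - exists (s * y), lx. simpl. rewrite E. split; [apply mulA|].
    split; auto. split; [apply unit_mul; auto|]. split.
    + rewrite <- mulA, Y1, Fx. auto.
    + rewrite mulA, <- Hc, Fx, Y2. auto.
  - exists (s * y * s), (s :: lx). simpl. split; [rewrite E; msimp; auto|].
    split; [|constructor; [repeat split|]; auto]. split; [repeat apply unit_mul; auto|]. split.
    + rewrite <- mulA, Hc, mulA, <- (mulA s y g), Y1, Hc. msimp. auto.
    + rewrite !mulA, <- Hc, <- (mulA s g y), Y2, Hc. msimp. auto.
Qed.

Lemma W_gen_word g u : Lam g -> W R g u ->
  exists l, Forall (fun s => S s /\ s * g = g * s) l /\ wp l = u.
Proof.
  intros Lg Wu. destruct (Lam_parabolic g Lg) as [[K [HK HW]] _].
  destruct (proj1 (HW u) Wu) as [l [F E]]. exists l. split; auto.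
  rewrite Forall_forall in F |- *. intros s I. split; [apply HK, F; auto|].
  assert (W R g s) as [_ C] by (apply HW; exists [s]; split; [constructor; auto|apply mul1r]).
  auto.
Qed.

(* W(g) = W*(g) W(h) for g <= h in Λ: by ECS6 the letters of λ*(g) commute with h. *)
Lemma W_factor g h u : Lam g -> Lam h -> sle R g h -> W R g u ->
  exists y x, u = y * x /\ Wstar R g y /\ W R h x.
Proof.
  intros Lg Lh Sgh Wu. destruct (W_gen_word g u Lg Wu) as [l [Fl El]].
  destruct (centraliser_word_split g l Fl) as [y [lx [E [Wy Fx]]]].
  exists y, (wp lx). split; [rewrite <- El; auto|]. split; auto. split.
  - apply (word_unit R S rc_coxeter). eapply Forall_impl; [|exact Fx]. intros s [Hs _]; auto.
  - apply wprod_comm. eapply Forall_impl; [|exact Fx].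
    intros s Hs. apply (lambda_star_mono g h Lg Lh Sgh s Hs).
Qed.

Lemma Lam_lift_above a e : Lam a -> idem R e -> sle R a e ->
  exists y g, Lam g /\ sle R a g /\ Wstar R a y /\ conj_to R y g e.
Proof.
  intros La Ie Sae.
  destruct (sle_conj_Lam a e (Lam_idem a La) Ie Sae)
    as [u [a1 [g [[u' [U1 U2]] [L1 [Lg [S1g [C1 Cg]]]]]]]].
  apply conj_to_inverse with (w' := u') in C1, Cg; auto.
  assert (a1 = a) by (apply (Lam_conj_eq a1 a u u'); auto). subst a1.
  assert (Wu : W R a u) by (split; [exists u'; auto|apply (comm_of_conj_fix u u'); auto]).
  destruct (W_factor a g u La Lg S1g Wu) as [y [x [Eu [Wy [[x' [X1 X2]] Cx]]]]].
  exists y, g. do 3 (split; auto). destruct Wy as [[y' [Y1 Y2]] _].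
  assert (u' = x' * y') by (subst u; apply (inverse_unique (y * x)); auto; msimp; auto).
  subst u u'. apply (conj_to_of_inverse y y'); auto.
  rewrite <- Cg, <- (mulA y x g), Cx. msimp. auto.
Qed.

Lemma chain_sle (f : nat -> R) n i j : (forall k, k + 1 < n -> sle R (f k) (f (k + 1))) ->
  i < j -> j < n -> sle R (f i) (f j).
Proof.
  intros Hch Hij Hj. induction j as [|j IH]; [lia|].
  replace (Datatypes.S j) with (j + 1) in * by lia.
  destruct (Nat.eq_dec i j) as [->|Hne]; [apply Hch; lia|].
  apply (sle_trans _ (f j)); [apply IH; lia|apply Hch; lia].
Qed.

Lemma chain_conj_Lam m (e : nat -> R) : (forall i, i < m -> idem R (e i)) ->
  (forall i, i + 1 < m -> sle R (e i) (e (i + 1))) ->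
  exists w f, is_unit R w /\ (forall i, i < m -> Lam (f i)) /\
    (forall i, i + 1 < m -> sle R (f i) (f (i + 1))) /\ (forall i, i < m -> conj_to R w (f i) (e i)).
Proof.
  induction m as [|m IH]; intros Hid Hch.
  { exists 1, (fun _ => 1). split; [apply unit_one|]. repeat split; intros; lia. }
  destruct m as [|m].
  { destruct (idem_conj_Lam (e 0) (Hid 0 ltac:(lia))) as [f0 [w [L0 [U0 C0]]]].
    exists w, (fun _ => f0). split; auto. split; [auto|]. split; [intros; lia|].
    intros i Hi. replace i with 0 by lia. auto. }
  destruct IH as [w [f [[w' [W1 W2]] [Lf [Cf Kf]]]]]; [intros i Hi; apply Hid; lia|intros i Hi; apply Hch; lia|].
  assert (Ew : forall i, i <= m -> w * f i * w' = e i)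
    by (intros i Hi; apply conj_to_inverse; auto; apply Kf; lia).
  set (e' := w' * e (m + 1) * w).
  assert (Sae : sle R (f m) e').
  { replace (f m) with (w' * e m * w) by (rewrite <- Ew; auto; msimp; auto).
    apply sle_conj; auto. apply Hch; lia. }
  assert (Lm : Lam (f m)) by (apply Lf; lia).
  assert (Ie' : idem R e') by (apply idem_conj; auto; apply Hid; lia).
  destruct (Lam_lift_above (f m) e' Lm Ie' Sae) as [y [g [Lg [Sg [Wy Cy]]]]].
  pose proof Wy as [[y' [Y1 Y2]] _]. apply conj_to_inverse with (w' := y') in Cy; auto.
  exists (w * y), (fun i => if i <=? m then f i else g).
  split; [apply (unit_of_inverse _ (y' * w')); msimp; auto|].
  split; [|split]; intros i Hi.
  - destruct (Nat.leb_spec i m); auto. apply Lf; lia.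
  - destruct (Nat.leb_spec i m); [|lia].
    destruct (Nat.leb_spec (i + 1) m); [apply Cf; lia|]. replace i with m by lia. auto.
  - apply (conj_to_of_inverse _ (y' * w')); try (msimp; auto).
    destruct (Nat.leb_spec i m).
    + assert (Fix : y * f i * y' = f i).
      { apply (Wstar_conj_below (f m) y y'); auto. destruct (Nat.eq_dec i m) as [->|].
        - apply sle_refl, Lam_idem; auto.
        - apply (chain_sle f (m + 1)); [intros k Hk; apply Cf|..]; lia. }
      transitivity (w * (y * f i * y') * w'); [msimp; auto|]. rewrite Fix. apply Ew; auto.
    + transitivity (w * (y * g * y') * w'); [msimp; auto|]. rewrite Cy. unfold e'.
      replace i with (m + 1) by lia. msimp. auto.
Qed.

(* ECS4 applied to e (w^-1 e w) <= w^-1 e w gives a pair in Λ whose top is e by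
   ECS2 and whose bottom is e by minimality; hence w^-1 e w <= e. *)
Lemma least_Lam_central e w : Lam e -> (forall h, Lam h -> sle R e h) ->
  is_unit R w -> w * e = e * w.
Proof.
  intros Le Hl [w' [W1 W2]]. pose proof (Lam_idem e Le) as Ie.
  set (e' := w' * e * w).
  assert (Ie' : idem R e') by (apply idem_conj; auto).
  assert (C : e * e' = e' * e) by (apply rc_idem_comm; auto).
  destruct (sle_conj_Lam (e * e') e' (idem_mul e e' Ie Ie') Ie' (sle_mul_r e e' Ie' C))
    as [t [p1 [p2 [[t' [T1 T2]] [L1 [L2 [S12 [C1 C2]]]]]]]].
  apply conj_to_inverse with (w' := t') in C1, C2; auto.
  assert (p2 = e).
  { apply (Lam_conj_eq p2 e (w * t) (t' * w')); auto; try (msimp; auto).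
    transitivity (w * (t * p2 * t') * w'); [msimp; auto|]. rewrite C2. unfold e'. msimp. auto. }
  subst p2. assert (p1 = e) by (apply sle_antisym; auto). subst p1.
  assert (Se' : sle R e' e) by (rewrite <- C2, C1; apply sle_mul_l; auto).
  apply (comm_of_conj_fix w w'); auto. apply (Lam_le_conj_eq e w w' Le W1 W2).
  replace e with (w * e' * w') at 1 by (unfold e'; msimp; auto). apply sle_conj; auto.
Qed.

Lemma least_Lam_lambda e I : Lam e -> (forall h, Lam h -> sle R e h) ->
  is_lambda R S e I -> forall s, I s <-> S s.
Proof.
  intros Le Hl [HI HW] s. split; auto. intro Hs.
  pose proof (gen_unit R S rc_coxeter s Hs) as Us.
  destruct (proj1 (HW s) (conj Us (least_Lam_central e s Le Hl Us))) as [l [F E]].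
  apply (parabolic_gen_mem R S rc_coxeter I s l); auto.
Qed.

(* With k = e (w f w^-1), ECS4 applied to k <= e and to k <= w f w^-1 yields the
   same g in Λ; comparing the two conjugators splits w through W(e), W(g), W(f). *)
Lemma Lam_unit_decomp e f w w' : Lam e -> Lam f -> w * w' = 1 -> w' * w = 1 ->
  exists g u y c, Lam g /\ sle R g e /\ sle R g f /\ W R e u /\ Wstar R g y /\ W R f c /\
    w = u * y * c /\ conj_to R u g (e * (w * f * w')).
Proof.
  intros Le Lf W1 W2. pose proof (Lam_idem e Le) as Ie. pose proof (Lam_idem f Lf) as If.
  set (f' := w * f * w').
  assert (If' : idem R f') by (apply idem_conj; auto).
  assert (C : e * f' = f' * e) by (apply rc_idem_comm; auto).
  assert (Ik : idem R (e * f')) by (apply idem_mul; auto).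
  destruct (sle_conj_Lam (e * f') e Ik Ie (sle_mul_l e f' Ie C))
    as [u [g [e2 [[u' [U1 U2]] [Lg [Le2 [Sg [Cu Cu2]]]]]]]].
  apply conj_to_inverse with (w' := u') in Cu, Cu2; auto.
  assert (e2 = e) by (apply (Lam_conj_eq e2 e u u'); auto). subst e2.
  destruct (sle_conj_Lam (e * f') f' Ik If' (sle_mul_r e f' If' C))
    as [v [h [f2 [[v' [V1 V2]] [Lh [Lf2 [Sh [Cv Cv2]]]]]]]].
  apply conj_to_inverse with (w' := v') in Cv, Cv2; auto.
  assert (f2 = f).
  { apply (Lam_conj_eq f2 f (w' * v) (v' * w)); auto; try (msimp; auto).
    transitivity (w' * (v * f2 * v') * w); [msimp; auto|]. rewrite Cv2. unfold f'. msimp. auto. }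
  subst f2.
  assert (Ey : u' * v * h * (v' * u) = g).
  { transitivity (u' * (v * h * v') * u); [msimp; auto|]. rewrite Cv, <- Cu. msimp. auto. }
  assert (h = g) by (apply (Lam_conj_eq h g (u' * v) (v' * u)); auto; msimp; auto). subst h.
  assert (Wy : W R g (u' * v)).
  { split; [apply (unit_of_inverse _ (v' * u)); msimp; auto|].
    apply (comm_of_conj_fix _ (v' * u)); auto. msimp. auto. }
  assert (Wb : W R f (v' * w)).
  { split; [apply (unit_of_inverse _ (w' * v)); msimp; auto|].
    apply (comm_of_conj_fix _ (w' * v)); [msimp; auto|].
    transitivity (v' * (w * f * w') * v); [msimp; auto|]. fold f'. rewrite <- Cv2. msimp. auto. }
  destruct (W_factor g f (u' * v) Lg Lf Sh Wy) as [y [x [Ex [Wsy Wx]]]].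
  assert (Wu : W R e u) by (split; [exists u'; auto|apply (comm_of_conj_fix u u'); auto]).
  exists g, u, y, (x * (v' * w)). repeat (split; [solve [auto using W_mul]|]).
  split; [|apply (conj_to_of_inverse u u'); auto].
  transitivity (u * (u' * v) * (v' * w)); [msimp; auto|]. rewrite Ex. msimp. auto.
Qed.

(* Since w is minimal in W(e) w W(f) and the double coset meets W*(g) = W_K,
   w itself lies in W*(g). *)
Lemma Red_Wstar e f g w u y c : Lam e -> Lam f -> Lam g -> Red R S e f w ->
  W R e u -> Wstar R g y -> W R f c -> w = u * y * c -> Wstar R g w.
Proof.
  intros Le Lf Lg Hr Wu Wsy Wc Ew.
  pose proof rc_coxeter as HS.
  destruct (Lam_parabolic e Le) as [[I [HI HWI]] _].
  destruct (Lam_parabolic f Lf) as [[J [HJ HWJ]] _].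
  destruct (Lam_parabolic g Lg) as [_ [K [HK HWK]]].
  destruct (proj1 (HWI u) Wu) as [la [Fa Ea]].
  destruct (proj1 (HWJ c) Wc) as [lc [Fc Ec]].
  destruct (proj1 (HWK y) Wsy) as [lk [Fk Ek]].
  destruct Wu as [[u' [U1 U2]] _]. destruct Wc as [[c' [C1 C2]] _].
  pose proof Hr as [Uw _]. pose proof HS as [_ [_ [Hgen _]]].
  destruct (Hgen w Uw) as [l0 [F0 E0]].
  destruct (reduced_subword R S HS l0 F0) as [lw [Rw [_ Ew0]]]. rewrite E0 in Ew0.
  apply HWK. exists lw. split; auto.
  apply (min_double_coset_parabolic R S HS I J K lw (rev la) (rev lc) lk); auto.
  - apply (Red_min_double_coset R S e f w); auto.
  - apply Forall_rev; auto.
  - apply Forall_rev; auto.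
  - rewrite (wprod_rev_inverse R S HS la u u'), (wprod_rev_inverse R S HS lc c c'), Ek, Ew0, Ew;
      eauto using Forall_impl.
    msimp. auto.
Qed.

Lemma Red_mul_Lam e f w : Lam e -> Lam f -> Red R S e f w ->
  Lam (e * w * f) /\ sle R (e * w * f) e /\ sle R (e * w * f) f /\
  w * (e * w * f) = e * w * f /\ e * w * f * w = e * w * f.
Proof.
  intros Le Lf Hr. pose proof Hr as [[w' [W1 W2]] _].
  destruct (Lam_unit_decomp e f w w' Le Lf W1 W2)
    as [g [u [y [c [Lg [Sge [Sgf [Wu [Wsy [Wc [Ew Cu]]]]]]]]]]].
  pose proof (Red_Wstar e f g w u y c Le Lf Lg Hr Wu Wsy Wc Ew) as Wsw.
  pose proof Wsw as [_ [G1 G2]].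
  pose proof Wu as [[u' [U1 U2]] _]. apply conj_to_inverse with (w' := u') in Cu; auto.
  assert (Sgk : sle R g (u * g * u')).
  { rewrite Cu. apply sle_mul; auto.
    rewrite <- (Wstar_conj_below g w w' g Wsw) by (auto using sle_refl, Lam_idem).
    apply sle_conj; auto. }
  pose proof (Lam_le_conj_eq g u u' Lg U1 U2 Sgk) as Eg. rewrite Cu in Eg.
  assert (Ewf : e * w * f = g) by (rewrite <- G2, <- Eg; msimp; auto).
  rewrite Ewf. auto.
Qed.

Lemma le_mul_W h e f w : idem R h -> idem R (e * w * f) ->
  sle R h e -> sle R h f -> W R h w -> sle R h (e * w * f).
Proof.
  intros Ih Ig [He1 He2] [Hf1 Hf2] [[w' [W1 W2]] Cw].
  assert (Q1 : h * (e * w * f) = w * h) by (rewrite !mulA, He1, <- Cw, <- mulA, Hf1; auto).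
  assert (Q2 : e * w * f * h = h * w) by (rewrite <- mulA, Hf2, <- mulA, Cw, mulA, He2; auto).
  assert (Q3 : h * w = h).
  { pose proof (idem_mul h (e * w * f) Ih Ig) as I2. unfold idem in I2. rewrite Q1 in I2.
    transitivity (w' * (w * h * (w * h))); [|rewrite I2; msimp; auto].
    rewrite !mulA, W2, mul1l, <- (mulA h w h), Cw, mulA, Ih. auto. }
  split; [rewrite Q1, Cw|rewrite Q2]; auto.
Qed.

Lemma Red_mul_spec e f w : Lam e -> Lam f -> Red R S e f w ->
  Lam (e * w * f) /\ sle R (e * w * f) e /\ sle R (e * w * f) f /\ W R (e * w * f) w /\
  (forall h, Lam h -> sle R h e -> sle R h f -> W R h w -> sle R h (e * w * f)) /\
  (forall w', w * w' = 1 -> w' * w = 1 -> f * w' * e = e * w * f).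
Proof.
  intros Le Lf Hr. pose proof Hr as [Uw _].
  destruct (Red_mul_Lam e f w Le Lf Hr) as [Lg [Se [Sf [G1 G2]]]].
  assert (Hmax : forall h, Lam h -> sle R h e -> sle R h f -> W R h w -> sle R h (e * w * f))
    by (intros; apply le_mul_W; auto using Lam_idem).
  do 3 (split; auto). split; [split; [auto|rewrite G1, G2; auto]|]. split; auto.
  intros w' V1 V2.
  destruct (Red_mul_Lam f e w' Lf Le (Red_inverse R S rc_coxeter e f w w' Hr V1 V2))
    as [Lg' [Sf' [Se' [H1 H2]]]].
  apply sle_antisym.
  - apply Hmax; auto. split; [exists w'; auto|].
    rewrite (fix_inverse_l w' w _ V1 H1), (fix_inverse_r w' w _ V2 H2). auto.
  - apply le_mul_W; auto using Lam_idem. split; [exists w; auto|].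
    rewrite (fix_inverse_l w w' _ V2 G1), (fix_inverse_r w w' _ V1 G2). auto.
Qed.
End RennerCoxeter.

Close Scope monoid_scope.

Theorem mainTheorem11 (R : monoid) (Lam S : R -> Prop)
  (HRC : gen_renner_coxeter R Lam S) :
  (forall (m : nat) (e : nat -> R),
     (forall i, i < m -> idem R (e i)) ->
     (forall i, i + 1 < m -> sle R (e i) (e (i + 1))) ->
     exists (w : R) (f : nat -> R), is_unit R w /\
       (forall i, i < m -> Lam (f i)) /\
       (forall i, i + 1 < m -> sle R (f i) (f (i + 1))) /\
       (forall i, i < m -> conj_to R w (f i) (e i))) /\
  (forall e : R, Lam e -> (forall h, Lam h -> sle R e h) ->
     forall I : R -> Prop, is_lambda R S e I -> forall s, I s <-> S s) /\
  (forall e f w : R, Lam e -> Lam f -> Red R S e f w ->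
     Lam (mmul (mmul e w) f) /\ sle R (mmul (mmul e w) f) e /\
     sle R (mmul (mmul e w) f) f /\ W R (mmul (mmul e w) f) w /\
     (forall h, Lam h -> sle R h e -> sle R h f -> W R h w ->
        sle R h (mmul (mmul e w) f)) /\
     (forall w', mmul w w' = mone -> mmul w' w = mone ->
        mmul (mmul f w') e = mmul (mmul e w) f)).
Proof.
  split; [|split].
  - exact (chain_conj_Lam R Lam S HRC).
  - intros e Le Hl I. exact (least_Lam_lambda R Lam S HRC e I Le Hl).
  - exact (Red_mul_spec R Lam S HRC).
Qed.
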